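(* Let $(A,\cdot,\circ)$ be a skew brace and $C$ a sub-skew brace which is a trivial skew brace and a left ideal in $A^{\mathrm{op}}$. Then for all $a\in A$ and $c\in C$, \[ c\circ a\circ\overline{c} \in \big(\lambda^{\mathrm{op}}_c(a)\,c\big)\circ C \quad\text{and}\quad a\circ C = C a. \]
   Context: A skew brace is a set $A$ with two group operations $\cdot$ (often written by juxtaposition) and $\circ$ such that $a\circ(bc) = (a\circ b)\,a^{-1}\,(a\circ c)$ for all $a,b,c\in A$. $a^{-1}$ denotes the inverse of $a$ in $(A,\cdot)$ and $\overline{a}$ its inverse in $(A,\circ)$. Define $\lambda^{\mathrm{op}}_a(b) = (a\circ b)a^{-1}$ (an automorphism of $(A,\cdot)$). A sub-skew brace is a subset that is a subgroup of both groups; it is trivial if $a\circ b=ab$ for all its elements. The opposite skew brace $A^{\mathrm{op}}$ is $A$ with $a\cdot^{\mathrm{op}}b=ba$ and the same $\circ$; a subgroup $I$ of $(A,\cdot)$ is a left ideal in $A^{\mathrm{op}}$ iff $\lambda^{\mathrm{op}}_a(x)\in I$ for all $a\in A$, $x\in I$. $a\circ C=\{a\circ y:y\in C\}$, $Ca=\{ya:y\in C\}$. *)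

Set Implicit Arguments.

Record is_group (T : Type) (op : T -> T -> T) (e : T) (inv : T -> T) : Prop := {
  grp_assoc : forall a b c, op a (op b c) = op (op a b) c;
  grp_idl : forall a, op e a = a;
  grp_idr : forall a, op a e = a;
  grp_invl : forall a, op (inv a) a = e;
  grp_invr : forall a, op a (inv a) = e
}.

Record skew_brace := {
  sb_car :> Type;
  sb_mul : sb_car -> sb_car -> sb_car;
  sb_one : sb_car;
  sb_inv : sb_car -> sb_car;
  sb_circ : sb_car -> sb_car -> sb_car;
  sb_cone : sb_car;
  sb_cinv : sb_car -> sb_car;
  sb_mul_group : is_group sb_mul sb_one sb_inv;
  sb_circ_group : is_group sb_circ sb_cone sb_cinv;
  sb_compat : forall a b c,
    sb_circ a (sb_mul b c) = sb_mul (sb_mul (sb_circ a b) (sb_inv a)) (sb_circ a c)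
}.
Arguments sb_mul {s}. Arguments sb_inv {s}. Arguments sb_circ {s}. Arguments sb_cinv {s}.

Section SkewBraceNotions.
Context {A : skew_brace}.

Definition lam_op (a b : A) : A := sb_mul (sb_circ a b) (sb_inv a).

Definition is_subgroup_mul (C : A -> Prop) : Prop :=
  C (sb_one A) /\ (forall x y, C x -> C y -> C (sb_mul x y)) /\
  (forall x, C x -> C (sb_inv x)).

Definition is_subgroup_circ (C : A -> Prop) : Prop :=
  C (sb_cone A) /\ (forall x y, C x -> C y -> C (sb_circ x y)) /\
  (forall x, C x -> C (sb_cinv x)).

Definition sub_skew_brace (C : A -> Prop) : Prop :=
  is_subgroup_mul C /\ is_subgroup_circ C.

Definition trivial_on (C : A -> Prop) : Prop :=
  forall a b, C a -> C b -> sb_circ a b = sb_mul a b.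

(* left ideal of A^op: subgroup of (A, .^op) (equivalently of (A, .))
   stable under all lambda^op_a *)
Definition left_ideal_op (C : A -> Prop) : Prop :=
  is_subgroup_mul C /\ (forall a x, C x -> C (lam_op a x)).

Definition circ_left_coset (a : A) (C : A -> Prop) : A -> Prop :=
  fun x => exists y, C y /\ x = sb_circ a y.
Definition mul_right_coset (C : A -> Prop) (a : A) : A -> Prop :=
  fun x => exists y, C y /\ x = sb_mul y a.

End SkewBraceNotions.

Set Implicit Arguments.

(* Both claims reduce to two identities valid in every skew brace A:
     (1)  a o y = lam_op a y * a,               (definition of lam_op)
     (2)  a o lam_op (cinv a) y = y * a,        (from the brace axiom)
   where cinv a is the inverse of a in (A, o).
   First claim: by (1), lam_op c a * c = c o a, so  (c o a) o cinv c  lies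
   in (lam_op c a * c) o C because cinv c is in C.
   Second claim: C is stable under every lam_op, so (1) gives a o C ⊆ C a
   and (2) gives C a ⊆ a o C. *)

Section GroupCancellation.
Variables (T : Type) (op : T -> T -> T) (e : T) (inv : T -> T).
Hypothesis G : is_group op e inv.

Lemma mulKg u v : op (inv u) (op u v) = v.
Proof. rewrite (grp_assoc G), (grp_invl G). apply (grp_idl G). Qed.

Lemma mulKVg u v : op u (op (inv u) v) = v.
Proof. rewrite (grp_assoc G), (grp_invr G). apply (grp_idl G). Qed.

Lemma mulgKV u v : op (op u (inv v)) v = u.
Proof. rewrite <- (grp_assoc G), (grp_invl G). apply (grp_idr G). Qed.

Lemma mul_right_absorb u v : op u v = u -> v = e.
Proof. intro H. rewrite <- (mulKg u v), H. apply (grp_invl G). Qed.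

Lemma inv_mul_eq_unit u v : op (inv u) v = e -> v = u.
Proof. intro H. rewrite <- (mulKVg u v), H. apply (grp_idr G). Qed.
End GroupCancellation.

Section SkewBraceIdentities.
Variable A : skew_brace.

Let M := sb_mul_group A.
Let O := sb_circ_group A.

Lemma circ_one_r (a : A) : sb_circ a (sb_one A) = a.
Proof.
  pose proof (sb_compat A a (sb_one A) (sb_one A)) as H.
  rewrite (grp_idl M), <- (grp_assoc M) in H.
  apply (inv_mul_eq_unit M). eapply (mul_right_absorb M). exact (eq_sym H).
Qed.

Lemma cone_eq_one : sb_cone A = sb_one A.
Proof. rewrite <- (circ_one_r (sb_cone A)). apply (grp_idl O). Qed.

Lemma lam_op_mul (a y : A) : sb_mul (lam_op a y) a = sb_circ a y.
Proof. apply (mulgKV M). Qed.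

(* a o (cinv a)^{-1} = a * a, from the brace axiom at (cinv a) (cinv a)^{-1}. *)
Lemma circ_inv_cinv (a : A) : sb_circ a (sb_inv (sb_cinv a)) = sb_mul a a.
Proof.
  pose proof (sb_compat A a (sb_cinv a) (sb_inv (sb_cinv a))) as H.
  rewrite (grp_invr M), circ_one_r, (grp_invr O), cone_eq_one, (grp_idl M) in H.
  rewrite <- (mulKVg M a (sb_circ a _)), <- H. reflexivity.
Qed.

Lemma circ_lam_op_cinv (a y : A) : sb_circ a (lam_op (sb_cinv a) y) = sb_mul y a.
Proof.
  unfold lam_op. rewrite (sb_compat A), (grp_assoc O), (grp_invr O),
    (grp_idl O), circ_inv_cinv.
  rewrite <- (grp_assoc M), (mulKg M). reflexivity.
Qed.

Lemma circ_coset_eq_mul_coset (C : A -> Prop) (a : A) :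
  (forall b x, C x -> C (lam_op b x)) ->
  forall x, circ_left_coset a C x <-> mul_right_coset C a x.
Proof.
  intros Hlam x. split.
  - intros [y [Hy ->]]. exists (lam_op a y).
    split; [apply Hlam, Hy | symmetry; apply lam_op_mul].
  - intros [y [Hy ->]]. exists (lam_op (sb_cinv a) y).
    split; [apply Hlam, Hy | symmetry; apply circ_lam_op_cinv].
Qed.
End SkewBraceIdentities.

Theorem lemma6p3 (A : skew_brace) (C : A -> Prop)
  (HCsub : sub_skew_brace C) (HCtriv : trivial_on C) (HCideal : left_ideal_op C) :
  forall (a c : A), C c ->
    circ_left_coset (sb_mul (lam_op c a) c) C
      (sb_circ (sb_circ c a) (sb_cinv c))
    /\ (forall x, circ_left_coset a C x <-> mul_right_coset C a x).
Proof.
  destruct HCsub as [_ [_ [_ HCcinv]]]. destruct HCideal as [_ Hlam].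
  intros a c Hc. split.
  - exists (sb_cinv c). split; [apply HCcinv, Hc |].
    rewrite lam_op_mul. reflexivity.
  - apply circ_coset_eq_mul_coset, Hlam.
Qed.
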